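(* Let $G$ be a finite group, $\{(Q_k,\widetilde Q_k)\}_k$ a family of pairs as in the context, and $Q$ a finite $p$-group. The map $$\coprod_k \psi:\ \coprod_k R(Q,\widetilde Q_k)\times_{\mathrm{Aut}(\widetilde Q_k|Q_k)}\mathrm{Cen}_{Q_k}(\widetilde Q_k,\widetilde Q_k,G)\longrightarrow \mathrm{nCen}(Q,G),\qquad \psi(\gamma\times[\delta])=[\delta\circ\gamma],$$ is a well-defined isomorphism of $\mathrm{Out}(Q)$-sets, natural in $G$.
   Context: Let $p$ be a fixed prime; all groups are finite. For groups $Q,G$, $\mathrm{Inj}(Q,G)$ denotes the set of $G$-conjugacy classes $[\alpha]$ of injective homomorphisms $\alpha:Q\to G$ (where $\alpha\sim c_g\circ\alpha$ for $g\in G$); $\mathrm{Out}(Q)$ acts by precomposition. $\mathrm{Cen}(Q,G)\subseteq\mathrm{Inj}(Q,G)$ is the set of classes $[\alpha]$ such that $C_G(\alpha(Q))/Z(\alpha(Q))$ has order prime to $p$, and $\mathrm{nCen}(Q,G)=\mathrm{Inj}(Q,G)\setminus\mathrm{Cen}(Q,G)$. For a $p$-subgroup $H\le G$, $\widetilde H$ denotes a Sylow $p$-subgroup of $H\cdot C_G(H)$. Given $p$-groups $P_1\le\widetilde P_1$ and $P_2\le\widetilde P_2$, we write $\widetilde P_1\sim\widetilde P_2$ (the pairs are equivalent) if there is an isomorphism $s:\widetilde P_1\to\widetilde P_2$ with $s(P_1)=P_2$. A pair arising in $G$ is $(H,\widetilde H)$ with $H\le G$ a $p$-subgroup such that $p$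 divides $|C_G(H)/Z(H)|$. Fix a family $\{(Q_k,\widetilde Q_k)\}_k$ of pairwise inequivalent pairs of $p$-groups $Q_k\le\widetilde Q_k$, each equivalent to a pair arising in $G$, and containing a representative of the equivalence class of every pair arising in $G$. $\mathrm{Cen}_{Q_k}(\widetilde Q_k,\widetilde Q_k,G)$ is the set of classes $[\beta]\in\mathrm{Cen}(\widetilde Q_k,G)$ such that $\widetilde{\beta(Q_k)}\sim\widetilde Q_k$ (i.e. $(\beta(Q_k),\widetilde{\beta(Q_k)})$ is equivalent to $(Q_k,\widetilde Q_k)$). $R(Q,\widetilde Q_k)$ is the set of injective homomorphisms $\alpha:Q\to\widetilde Q_k$ with $\alpha(Q)=Q_k$, and $\mathrm{Aut}(\widetilde Q_k|Q_k)=\{a\in\mathrm{Aut}(\widetilde Q_k): a(Q_k)=Q_k\}$, which acts on $R(Q,\widetilde Q_k)$ by postcomposition and on $\mathrm{Cen}_{Q_k}(\widetilde Q_k,\widetilde Q_k,G)$ by precomposition; $\times_{\mathrm{Aut}(\widetilde Q_k|Q_k)}$ is the balanced product, in which $a\gamma\times[\delta]=\gamma\times[\delta a]$. $\mathrm{Out}(Q)$ acts on the balanced product via precomposition on $R(Q,\widetilde Q_k)$. *)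

From mathcomp Require Import all_boot all_fingroup all_solvable.
Set Implicit Arguments. Unset Strict Implicit. Unset Printing Implicit Defensive.
Local Open Scope group_scope.

Definition inj_hom (aT rT : finGroupType) (A : {set aT}) (B : {set rT})
  (f : aT -> rT) : Prop :=
  [/\ {in A &, {morph f : x y / x * y}}, {in A &, injective f} & f @: A \subset B].

Definition gconj (aT gT : finGroupType) (A : {set aT}) (G : {set gT})
  (f g : aT -> gT) : Prop :=
  exists2 x, x \in G & {in A, forall a, g a = f a ^ x}.

(* |C_G(H)/Z(H)| is prime to p  (the order of the quotient is the index). *)
Definition cen_cond (gT : finGroupType) (p : nat) (G H : {set gT}) : bool :=
  ~~ (p %| #|'C_G(H) : 'Z(H)|).

Definition in_Cen (aT gT : finGroupType) (p : nat) (A : {set aT}) (G : {set gT})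
  (f : aT -> gT) : Prop := inj_hom A G f /\ cen_cond p G (f @: A).
Definition in_nCen (aT gT : finGroupType) (p : nat) (A : {set aT}) (G : {set gT})
  (f : aT -> gT) : Prop := inj_hom A G f /\ ~~ cen_cond p G (f @: A).

Definition is_tilde (gT : finGroupType) (p : nat) (G H S : {set gT}) : bool :=
  p.-Sylow(H * 'C_G(H)) S.

Definition pair_equiv (aT bT : finGroupType) (P1 S1 : {set aT}) (P2 S2 : {set bT})
  : Prop :=
  exists s : aT -> bT, [/\ inj_hom S1 S2 s, s @: S1 = S2 & s @: P1 = P2].

Definition arising (gT : finGroupType) (p : nat) (G H : {set gT}) : Prop :=
  [/\ H \subset G, p.-group H & p %| #|'C_G(H) : 'Z(H)|].

Definition in_CenQ (tT gT : finGroupType) (p : nat) (Qk Qt : {set tT}) (G : {set gT})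
  (b : tT -> gT) : Prop :=
  in_Cen p Qt G b /\
  exists S : {group gT}, is_tilde p G (b @: Qk) S /\ pair_equiv (b @: Qk) S Qk Qt.

Definition in_R (qT tT : finGroupType) (Q : {set qT}) (Qk Qt : {set tT})
  (c : qT -> tT) : Prop := inj_hom Q Qt c /\ c @: Q = Qk.

Definition in_AutQ (tT : finGroupType) (Qk Qt : {set tT}) (a : tT -> tT) : Prop :=
  [/\ inj_hom Qt Qt a, a @: Qt = Qt & a @: Qk = Qk].

(* phi in Aut(Q) (Out(Q) acts through Aut(Q)). *)
Definition in_Aut (qT : finGroupType) (Q : {set qT}) (f : qT -> qT) : Prop :=
  inj_hom Q Q f /\ f @: Q = Q.

(* A class [f] in nCen(Q,G) has image [H = f(Q)] with p dividing |C_G(H) : Z(H)|, so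
   [(H, H~)] is a pair arising in G; it is equivalent to exactly one model [(Qk, Qt)], and
   transporting [f] along that equivalence factors it as [δ ∘ γ].  Conversely, for [δ] in
   Cen_{Qk}(Qt, Qt, G) the image [δ(Qt)] is a subgroup of [H C_G(H)], [H = δ(Qk)], of the
   order of a tilde of [H], hence is one; p divides |C_G(H) : Z(H)| iff [H] is smaller
   than its tilde, and this holds because it holds for the arising pair that [(Qk, Qt)]
   represents.  Injectivity comes from Sylow's theorem in [C_G(H)]: two tildes of [H] are
   conjugate by an element centralizing [H], which turns a conjugacy between [δ ∘ γ] and
   [δ' ∘ γ'] into an equivalence of the models and an element of Aut(Qt | Qk). *)

From mathcomp Require Import all_boot all_fingroup all_solvable.
Set Implicit Arguments. Unset Strict Implicit. Unset Printing Implicit Defensive.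
Local Open Scope group_scope.

Lemma join_subcentE (gT : finGroupType) (G H : {group gT}) :
  H <*> 'C_G(H) = H * 'C_G(H).
Proof. by rewrite norm_joinEr // subIset // cent_sub orbT. Qed.

Lemma conjsg_subcent (gT : finGroupType) (G A : {set gT}) y :
  y \in 'C_G(A) -> A :^ y = A.
Proof. by case/setIP=> _ /(subsetP (cent_sub A)) /normP. Qed.

Section Tilde.

Variables (gT : finGroupType) (p : nat) (G H S : {group gT}).
Hypotheses (p_pr : prime p) (sHG : H \subset G) (pH : p.-group H).
Hypothesis tiS : is_tilde p G H S.

Let sylS : p.-Sylow(H <*> 'C_G(H)) S.
Proof. by rewrite join_subcentE. Qed.

Lemma tilde_sub : H \subset S.
Proof.
have nHC : 'C_G(H) \subset 'N(H) by rewrite subIset // cent_sub orbT.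
apply: normal_sub_max_pgroup (Hall_max sylS) pH _.
by rewrite /normal joing_subl join_subG normG nHC.
Qed.

Lemma tilde_sub_mul : S \subset H * 'C_G(H).
Proof. exact: pHall_sub tiS. Qed.

Lemma tilde_subG : S \subset G.
Proof. by apply: subset_trans tilde_sub_mul _; rewrite mul_subG // subsetIl. Qed.

Lemma mul_subcent_tilde : H * ('C_G(H) :&: S) = S.
Proof. by rewrite group_modl ?tilde_sub //; apply/setIidPr; apply: tilde_sub_mul. Qed.

Lemma Sylow_subcent_tilde : p.-Sylow('C_G(H)) ('C_G(H) :&: S).
Proof.
apply: Sylow_setI_normal sylS.
rewrite /normal joing_subr join_subG /= normG andbT.
by apply: subset_trans (subcent_norm G H); rewrite subsetI sHG normG.
Qed.

(* [H ∩ C_G(H) ∩ S = Z(H)], so [Z(H)] is Sylow in [C_G(H)] iff it is all of [C_G(H) ∩ S]. *)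
Lemma tilde_indexE : (p %| #|'C_G(H) : 'Z(H)|) = (#|H| < #|S|)%N.
Proof.
set C := 'C_G(H).
have eZ : H :&: (C :&: S) = 'Z(H).
  apply/setP=> x; rewrite /center /C !inE; case Hx: (x \in H) => //=.
  by rewrite (subsetP sHG) ?(subsetP tilde_sub) // andbT.
have sZCS : 'Z(H) \subset C :&: S by rewrite -eZ subsetIr.
have sZC : 'Z(H) \subset C := subset_trans sZCS (subsetIl _ _).
have pZ : p.-group 'Z(H) := pgroupS (center_sub H) pH.
have cardS := mul_cardG H [group of C :&: S]; rewrite /= mul_subcent_tilde eZ in cardS.
have -> : (p %| #|C : 'Z(H)|) = ~~ p.-Sylow(C) 'Z(H).
  by rewrite /pHall sZC pZ /= (p'natE _ p_pr) negbK.
rewrite pHallE sZC /= -(card_Hall Sylow_subcent_tilde) eqn_leq subset_leq_card //=.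
by rewrite -ltnNge -(ltn_pmul2l (cardG_gt0 S)) -cardS ltn_pmul2r ?cardG_gt0.
Qed.

(* Any p-subgroup [P] of [C_G(S)] joins [S] to a p-subgroup of [H C_G(H)], so
   [P ⊆ S] by maximality; hence [Z(S)] is Sylow in [C_G(S)]. *)
Lemma tilde_cen_cond : cen_cond p G S.
Proof.
rewrite /cen_cond.
have sZC : 'Z(S) \subset 'C_G(S) by rewrite /center setSI ?tilde_subG.
have pZ : p.-group 'Z(S) := pgroupS (center_sub S) (pHall_pgroup sylS).
have [P sylP sZP] := Sylow_superset sZC pZ.
have cSP : P \subset 'C(S) := subset_trans (pHall_sub sylP) (subsetIr _ _).
have sPCH : P \subset 'C_G(H).
  by apply: subset_trans (pHall_sub sylP) _; rewrite setIS // centS // tilde_sub.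
have sPS : P \subset S.
  suff <- : S <*> P :=: S by apply: joing_subr.
  apply: (sub_pHall sylS) _ (joing_subl _ _) _.
    rewrite /= (cent_joinEr cSP) pgroupM (pHall_pgroup sylS).
    exact: pHall_pgroup sylP.
  by rewrite join_subG (pHall_sub sylS) (subset_trans sPCH) ?joing_subr.
have -> : 'Z(S) = P by apply/eqP; rewrite eqEsubset sZP subsetI sPS.
by rewrite -(p'natE _ p_pr); case/and3P: sylP.
Qed.

End Tilde.

Lemma tilde_conj_subcent (gT : finGroupType) (p : nat) (G H S S' : {group gT}) :
  prime p -> H \subset G -> p.-group H -> is_tilde p G H S -> is_tilde p G H S' ->
  exists2 y, y \in 'C_G(H) & S' :=: S :^ y.
Proof.
move=> p_pr sHG pH tiS tiS'.
have [y Cy ey] := Sylow_trans (Sylow_subcent_tilde sHG tiS) (Sylow_subcent_tilde sHG tiS').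
exists y => //.
rewrite -(mul_subcent_tilde pH tiS) -(mul_subcent_tilde pH tiS') conjsMg ey.
by rewrite (conjsg_subcent Cy).
Qed.

Lemma tilde_card (gT : finGroupType) (p : nat) (G H S T : {group gT}) :
  is_tilde p G H S -> T \subset H * 'C_G(H) -> #|T| = #|S| -> is_tilde p G H T.
Proof.
rewrite /is_tilde -join_subcentE => sylS sT eT.
by rewrite pHallE sT eT (card_Hall sylS) eqxx.
Qed.

Lemma arising_tilde_card (gT : finGroupType) (p : nat) (G H S : {group gT}) :
  prime p -> arising p G H -> is_tilde p G H S -> (#|H| < #|S|)%N.
Proof. by move=> p_pr [sHG pH dvd] tiS; rewrite -(tilde_indexE p_pr sHG pH tiS). Qed.

Section InjHom.

Variables aT rT : finGroupType.
Implicit Types (A : {set aT}) (B : {set rT}) (f g : aT -> rT).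

Lemma inj_hom_morph A B f : inj_hom A B f -> {in A &, {morph f : x y / x * y}}.
Proof. by case. Qed.

Lemma inj_hom_mem A B f x : inj_hom A B f -> x \in A -> f x \in B.
Proof. by case=> _ _ /subsetP sfAB Ax; rewrite sfAB ?imset_f. Qed.

Lemma inj_hom_subr A B B' f : inj_hom A B f -> f @: A \subset B' -> inj_hom A B' f.
Proof. by case. Qed.

Lemma inj_hom_subl A A' B f : inj_hom A B f -> A' \subset A -> inj_hom A' B f.
Proof.
case=> fM fI sfAB sA'A; split; last exact: subset_trans (imsetS _ sA'A) sfAB.
- by move=> x y /(subsetP sA'A) Ax /(subsetP sA'A) Ay; apply: fM.
- by move=> x y /(subsetP sA'A) Ax /(subsetP sA'A) Ay; apply: fI.
Qed.

Lemma inj_hom_eq_in (D : {group aT}) B f g :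
  {in D, f =1 g} -> inj_hom D B f -> inj_hom D B g.
Proof.
move=> efg [fM fI sfDB]; split; last by rewrite -(eq_in_imset efg).
- by move=> x y Dx Dy; rewrite -!efg ?groupM // fM.
- by move=> x y Dx Dy; rewrite -!efg //; apply: fI.
Qed.

Definition inj_hom_morphism (D : {group aT}) B f (h : inj_hom D B f) :
  {morphism D >-> rT} := Morphism (inj_hom_morph h).

Variables (D : {group aT}) (B : {set rT}) (f : aT -> rT).
Hypothesis h : inj_hom D B f.

Lemma injm_inj_hom : 'injm (inj_hom_morphism h).
Proof. by apply/injmP; case: h. Qed.

Lemma inj_hom_morphimE A : A \subset D -> f @: A = inj_hom_morphism h @* A.
Proof. by move=> sAD; rewrite morphimEsub. Qed.

Lemma inj_hom_group_set (A : {group aT}) : A \subset D -> group_set (f @: A).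
Proof. by move=> sAD; rewrite inj_hom_morphimE ?groupP. Qed.

Lemma card_inj_hom (A : {group aT}) : A \subset D -> #|f @: A| = #|A|.
Proof. by move=> sAD; rewrite inj_hom_morphimE // card_injm ?injm_inj_hom. Qed.

Lemma inj_hom_pgroup p (A : {group aT}) : A \subset D -> p.-group (f @: A) = p.-group A.
Proof. by move=> sAD; rewrite inj_hom_morphimE // injm_pgroup ?injm_inj_hom. Qed.

Lemma inj_hom_sub_mul_cent (T P : {group aT}) : T \subset D -> P \subset T ->
  T \subset P * 'C(P) -> f @: T \subset f @: P * 'C(f @: P).
Proof.
move=> sTD sPT sT_PC; have sPD := subset_trans sPT sTD.
have <- : P * 'C_T(P) = T by rewrite setIC group_modl //; apply/setIidPr.
rewrite !inj_hom_morphimE ?mul_subG ?(subset_trans (subsetIl _ _) sTD) //.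
rewrite morphimMl //.
by rewrite injm_subcent ?injm_inj_hom // mulgS ?subsetIr.
Qed.

Lemma invm_inj_hom_imset A : A \subset D -> invm injm_inj_hom @: (f @: A) = A.
Proof.
move=> sAD; rewrite inj_hom_morphimE // -morphimEsub ?morphim_invm //.
exact: morphimS.
Qed.

Lemma inj_hom_invm (eB : f @: D = B) :
  inj_hom B D (invm injm_inj_hom) /\ invm injm_inj_hom @: B = D.
Proof.
have eB' : inj_hom_morphism h @* D = B by rewrite -inj_hom_morphimE.
have eD : invm injm_inj_hom @: B = D by have := invm_inj_hom_imset (subxx D); rewrite eB.
split=> //; split; last by rewrite eD.
- by move=> x y Bx By; rewrite morphM ?eB'.
- by move=> x y Bx By; apply: (injmP (injm_invm _)); rewrite /= eB'.
Qed.

End InjHom.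

Lemma inj_hom_comp (aT bT cT : finGroupType) (A : {set aT}) (B : {set bT})
  (C : {set cT}) f g : inj_hom A B f -> inj_hom B C g -> inj_hom A C (g \o f).
Proof.
move=> hf [gM gI sgBC]; have [fM fI _] := hf; split.
- by move=> x y Ax Ay /=; rewrite fM // gM // (inj_hom_mem hf).
- by move=> x y Ax Ay /= /gI efxy; apply: fI => //; apply: efxy; apply: (inj_hom_mem hf).
- rewrite imset_comp; apply: subset_trans (imsetS _ _) sgBC.
  by apply/subsetP=> _ /imsetP[x Ax ->]; apply: (inj_hom_mem hf).
Qed.

Lemma conj_inj_hom (gT : finGroupType) (A : {set gT}) x :
  inj_hom A (A :^ x) (conjg^~ x).
Proof.
split=> //.
- by move=> y z _ _ /=; rewrite conjMg.
- by move=> y z _ _ /=; apply: conjg_inj.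
Qed.

Lemma conjG_inj_hom (gT : finGroupType) (G : {group gT}) x :
  x \in G -> inj_hom G G (conjg^~ x) /\ (conjg^~ x) @: G = G.
Proof.
move=> Gx; have eG : G :^ x = G by rewrite conjGid.
by split; [rewrite -{2}eG; apply: conj_inj_hom | apply: eG].
Qed.

Lemma pair_equiv_trans (aT bT cT : finGroupType) (P1 S1 : {set aT})
  (P2 S2 : {set bT}) (P3 S3 : {set cT}) :
  pair_equiv P1 S1 P2 S2 -> pair_equiv P2 S2 P3 S3 -> pair_equiv P1 S1 P3 S3.
Proof.
move=> [s [hs es fs]] [t [ht et ft]]; exists (t \o s).
by split; [apply: inj_hom_comp hs ht | rewrite imset_comp es | rewrite imset_comp fs].
Qed.

Lemma pair_equiv_sym (aT bT : finGroupType) (P1 S1 : {group aT}) (P2 S2 : {set bT}) :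
  P1 \subset S1 -> pair_equiv P1 S1 P2 S2 -> pair_equiv P2 S2 P1 S1.
Proof.
move=> sP [s [hs es fs]]; have [hi ei] := inj_hom_invm hs es.
by exists (invm (injm_inj_hom hs)); rewrite -fs invm_inj_hom_imset.
Qed.

Lemma pair_equiv_imset (aT bT : finGroupType) (P S : {set aT}) (B : {set bT}) f :
  inj_hom S B f -> pair_equiv P S (f @: P) (f @: S).
Proof. by move=> hf; exists f; split=> //; apply: inj_hom_subr hf _. Qed.

Lemma pair_equiv_conj (gT : finGroupType) (P S : {set gT}) x :
  pair_equiv P S (P :^ x) (S :^ x).
Proof. exact: pair_equiv_imset (conj_inj_hom S x). Qed.

Lemma pair_equiv_card (aT bT : finGroupType) (P1 S1 : {set aT}) (P2 S2 : {set bT}) :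
  P1 \subset S1 -> pair_equiv P1 S1 P2 S2 -> #|P1| = #|P2| /\ #|S1| = #|S2|.
Proof.
move=> sP [s [[_ sI _] <- <-]].
by rewrite !card_in_imset //; apply: sub_in2 sI; apply/subsetP.
Qed.

Section Transport.

Variables (gT gT' : finGroupType) (G : {group gT}) (G' : {group gT'}) (F : gT -> gT').
Hypotheses (hF : inj_hom G G' F) (eF : F @: G = G').

Let subcent_inj_hom (X : {group gT}) : X \subset G ->
  'C_G'(inj_hom_morphism hF @* X) = inj_hom_morphism hF @* 'C_G(X).
Proof.
have eG : inj_hom_morphism hF @* G = G' by rewrite -inj_hom_morphimE.
by move=> sXG; rewrite injm_subcent ?injm_inj_hom // eG.
Qed.

Lemma cen_cond_inj_hom p (X : {group gT}) :
  X \subset G -> cen_cond p G' (F @: X) = cen_cond p G X.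
Proof.
move=> sXG; have injF := injm_inj_hom hF.
rewrite /cen_cond (inj_hom_morphimE hF sXG) subcent_inj_hom // -injm_center //.
by rewrite index_injm // subsetIl.
Qed.

Lemma is_tilde_inj_hom p (H S : {group gT}) :
  H \subset G -> S \subset G -> is_tilde p G H S -> is_tilde p G' (F @: H) (F @: S).
Proof.
move=> sHG sSG; have injF := injm_inj_hom hF.
rewrite /is_tilde !(inj_hom_morphimE hF) // subcent_inj_hom //.
by rewrite -morphimMl // -join_subcentE injm_pHall // join_subG sHG subsetIl.
Qed.

Lemma CenQ_inj_hom p (tT : finGroupType) (Qk Qt : {group tT}) b :
  Qk \subset Qt -> in_CenQ p Qk Qt G b -> in_CenQ p Qk Qt G' (F \o b).
Proof.
move=> sQ [[hb cb] [S [tiS peS]]].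
have sQtG : b @: Qt \subset G by case: hb.
have sQkG : b @: Qk \subset G := subset_trans (imsetS _ sQ) sQtG.
have sSG : S \subset G.
  by apply: subset_trans (pHall_sub tiS) _; rewrite mul_subG // subsetIl.
split; first split.
- exact: inj_hom_comp hb hF.
- by rewrite imset_comp (cen_cond_inj_hom p (X := Group (inj_hom_group_set hb (subxx _)))).
exists (Group (inj_hom_group_set hF sSG)); split.
  by rewrite imset_comp; apply: (is_tilde_inj_hom (H := Group (inj_hom_group_set hb sQ))).
apply: pair_equiv_trans peS; rewrite imset_comp.
have [hG' _] := inj_hom_invm hF eF.
have sFSG' : F @: S \subset G' by rewrite -eF imsetS.
have := pair_equiv_imset (F @: (b @: Qk)) (inj_hom_subl hG' sFSG').
by rewrite !invm_inj_hom_imset.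
Qed.

End Transport.

Lemma CenQ_eq_in p (gT tT : finGroupType) (G : {group gT}) (Qk Qt : {group tT}) b b' :
  Qk \subset Qt -> {in Qt, b =1 b'} -> in_CenQ p Qk Qt G b -> in_CenQ p Qk Qt G b'.
Proof.
move=> sQ ebb' [[hb cb] tiQk].
have eQk : b @: Qk = b' @: Qk by apply: eq_in_imset; apply: sub_in1 ebb'; apply/subsetP.
split; first split.
- exact: inj_hom_eq_in ebb' hb.
- by rewrite -(eq_in_imset ebb').
by rewrite -eQk.
Qed.

Lemma CenQ_tilde p (gT tT : finGroupType) (G : {group gT}) (Qk Qt : {group tT}) b :
  prime p -> Qk \subset Qt -> p.-group Qt -> in_CenQ p Qk Qt G b ->
  [/\ b @: Qk \subset G, p.-group (b @: Qk) & is_tilde p G (b @: Qk) (b @: Qt)].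
Proof.
move=> p_pr sQ pQt [[hb _] [S [tiS [s [hs es fs]]]]].
pose H := Group (inj_hom_group_set hb sQ).
pose T := Group (inj_hom_group_set hb (subxx Qt)).
have sTG : T \subset G by have [_ _] := hb.
have sHG : H \subset G := subset_trans (imsetS _ sQ) sTG.
have pH : p.-group H by rewrite /= (inj_hom_pgroup hb _ sQ) (pgroupS sQ).
split=> //; change (is_tilde p G H T); have tiH : is_tilde p G H S := tiS.
have sHS := tilde_sub pH tiH.
have sS_HC : S \subset H * 'C(H).
  by apply: subset_trans (tilde_sub_mul tiH) _; rewrite mulgS // subsetIr.
(* [S ⊆ H C(H)] is carried to [Qt ⊆ Qk C(Qk)] by [s], then to [T ⊆ H C(H)] by [b]. *)
have sQt := inj_hom_sub_mul_cent hs (subxx S) sHS sS_HC; rewrite es fs in sQt.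
have sT := inj_hom_sub_mul_cent hb (subxx Qt) sQ sQt.
apply: (tilde_card tiH).
  by rewrite [G :&: _]setIC group_modl // subsetI sTG andbT; apply: sT.
by rewrite [LHS](card_inj_hom hb (subxx _)) -es (card_inj_hom hs (subxx _)).
Qed.

Section Psi.

Variables (p : nat) (gT : finGroupType) (G : {group gT}).
Variables (qT : finGroupType) (Q : {group qT}).
Hypothesis p_pr : prime p.

Lemma model_pair_card (tT : finGroupType) (Qk Qt : {group tT}) :
  Qk \subset Qt ->
  (exists H : {group gT}, arising p G H /\
     exists S : {group gT}, is_tilde p G H S /\ pair_equiv Qk Qt H S) ->
  (#|Qk| < #|Qt|)%N.
Proof.
move=> sQ [H [aH [S [tiS peS]]]]; have [-> ->] := pair_equiv_card sQ peS.
exact: arising_tilde_card aH tiS.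
Qed.

Variables (tT : finGroupType) (Qk Qt : {group tT}).
Hypotheses (sQ : Qk \subset Qt) (pQt : p.-group Qt).

Lemma CenQ_comp_nCen c b : (#|Qk| < #|Qt|)%N ->
  in_R Q Qk Qt c -> in_CenQ p Qk Qt G b -> in_nCen p Q G (b \o c).
Proof.
move=> ltQ [hc ec] hb; have [[hbi _] _] := hb.
split; first exact: inj_hom_comp hc hbi.
have [sHG pH tiT] := CenQ_tilde p_pr sQ pQt hb.
rewrite imset_comp ec /cen_cond negbK.
rewrite (tilde_indexE (H := Group (inj_hom_group_set hbi sQ))
                      (S := Group (inj_hom_group_set hbi (subxx Qt))) p_pr sHG pH tiT).
by rewrite /= !(card_inj_hom hbi).
Qed.

Lemma CenQ_gconj c b b' : in_R Q Qk Qt c -> in_CenQ p Qk Qt G b -> gconj Qt G b b' ->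
  in_CenQ p Qk Qt G b' /\ gconj Q G (b \o c) (b' \o c).
Proof.
move=> [hc _] hb [x Gx ebb']; split.
  have [hx ex] := conjG_inj_hom Gx.
  by apply: CenQ_eq_in sQ _ (CenQ_inj_hom hx ex sQ hb) => t Qt_t /=; rewrite ebb'.
by exists x => // q Qq /=; rewrite ebb' // (inj_hom_mem hc).
Qed.

Lemma comp_AutQ c b a :
  in_R Q Qk Qt c -> in_CenQ p Qk Qt G b -> in_AutQ Qk Qt a ->
  [/\ in_R Q Qk Qt (a \o c), in_CenQ p Qk Qt G (b \o a)
    & gconj Q G (b \o (a \o c)) ((b \o a) \o c)].
Proof.
move=> [hc ec] [[hb cb] tiQk] [ha eaT eaK]; split.
- by split; [exact: inj_hom_comp hc ha | rewrite imset_comp ec].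
- split; first split.
  + exact: inj_hom_comp ha hb.
  + by rewrite imset_comp eaT.
  by rewrite imset_comp eaK.
by exists 1 => // q _; rewrite conjg1.
Qed.

Lemma nCen_comp_Aut c b phi :
  in_nCen p Q G (b \o c) -> in_R Q Qk Qt c -> in_Aut Q phi ->
  [/\ in_R Q Qk Qt (c \o phi), in_nCen p Q G ((b \o c) \o phi)
    & gconj Q G (b \o (c \o phi)) ((b \o c) \o phi)].
Proof.
move=> [hbc nbc] [hc ec] [hphi ephi]; split.
- by split; [exact: inj_hom_comp hphi hc | rewrite (imset_comp c phi) ephi].
- by split; [exact: inj_hom_comp hphi hbc | rewrite (imset_comp (b \o c) phi) ephi].
by exists 1 => // q _; rewrite conjg1.
Qed.

Lemma nCen_natural (gT' : finGroupType) (G' : {group gT'}) (F : gT -> gT') c b b' :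
  inj_hom G G' F -> F @: G = G' ->
  in_nCen p Q G (b \o c) -> in_CenQ p Qk Qt G b ->
  [/\ in_CenQ p Qk Qt G' (F \o b),
      in_nCen p Q G' (F \o (b \o c)),
      (gconj Qt G b b' -> gconj Qt G' (F \o b) (F \o b'))
    & gconj Q G' ((F \o b) \o c) (F \o (b \o c))].
Proof.
move=> hF eF [hbc nbc] hb; split.
- exact: (CenQ_inj_hom hF eF sQ hb).
- split; first exact: (inj_hom_comp hbc hF).
  have sXG : Group (inj_hom_group_set hbc (subxx Q)) \subset G by have [_ _] := hbc.
  by rewrite (imset_comp F (b \o c)) (cen_cond_inj_hom hF eF p sXG).
- move=> [x Gx ebb']; exists (F x); first exact: inj_hom_mem hF Gx.
  move=> t Qt_t /=; rewrite ebb' //; have [[hbi _] _] := hb.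
  exact: (morphJ (inj_hom_morphism hF) (inj_hom_mem hbi Qt_t) Gx).
by exists 1 => // q _; rewrite conjg1.
Qed.

End Psi.

Lemma nCen_factor p (gT qT : finGroupType) (G : {group gT}) (Q : {group qT})
  (I : finType) (tT : I -> finGroupType) (Qk Qt : forall k : I, {group tT k}) :
  prime p ->
  (forall H S : {group gT}, arising p G H -> is_tilde p G H S ->
     exists k, pair_equiv H S (Qk k) (Qt k)) ->
  p.-group Q ->
  forall f : qT -> gT, in_nCen p Q G f ->
    exists k, exists (c : qT -> tT k) (b : tT k -> gT),
      [/\ in_R Q (Qk k) (Qt k) c, in_CenQ p (Qk k) (Qt k) G b
        & gconj Q G (b \o c) f].
Proof.
move=> p_pr hall pQ f [hf ncf].
pose H := Group (inj_hom_group_set hf (subxx Q)).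
have sHG : H \subset G by have [_ _] := hf.
have pH : p.-group H by rewrite /= (inj_hom_pgroup hf _ (subxx _)).
have [S sylS] := Sylow_exists p (H <*> 'C_G(H)).
have tiS : is_tilde p G H S by rewrite /is_tilde -join_subcentE.
have aH : arising p G H by split=> //; rewrite /cen_cond negbK in ncf.
have [sHS sSG] := (tilde_sub pH tiS, tilde_subG sHG tiS).
have [k [s [hs es fs]]] := hall H S aH tiS.
have [hsinv esinv] := inj_hom_invm hs es.
exists k, (s \o f), (invm (injm_inj_hom hs)); split.
- split; last by rewrite imset_comp.
  exact: inj_hom_comp (inj_hom_subr hf sHS) hs.
- have eH : invm (injm_inj_hom hs) @: Qk k = H by rewrite -fs invm_inj_hom_imset.
  split; first split.
  + by apply: inj_hom_subr hsinv _; rewrite esinv.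
  + by rewrite esinv; apply: (tilde_cen_cond p_pr sHG pH tiS).
  by exists S; rewrite eH; split=> //; exists s.
exists 1 => // q Qq; rewrite conjg1 /=.
by apply/esym/(invmE (injm_inj_hom hs)); apply: (subsetP sHS); apply: imset_f.
Qed.

(* A conjugacy between [b ∘ c] and [b' ∘ c'] conjugates [b(Qk)] onto [b'(Qk')], and then,
   after a further correction in [C_G(b'(Qk'))] given by Sylow's theorem, [b(Qt)] onto [b'(Qt')]. *)
Lemma gconj_comp_tilde p (gT qT : finGroupType) (G : {group gT}) (Q : {group qT})
  (tT tT' : finGroupType) (Qk Qt : {group tT}) (Qk' Qt' : {group tT'}) c b c' b' :
  prime p -> Qk \subset Qt -> p.-group Qt -> Qk' \subset Qt' -> p.-group Qt' ->
  in_R Q Qk Qt c -> in_CenQ p Qk Qt G b ->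
  in_R Q Qk' Qt' c' -> in_CenQ p Qk' Qt' G b' ->
  gconj Q G (b \o c) (b' \o c') ->
  exists x y, [/\ x \in G, y \in 'C_G(b' @: Qk'), b' @: Qk' = (b @: Qk) :^ x,
     b' @: Qt' = (b @: Qt) :^ (x * y)
   & {in Q, forall q, b' (c' q) = b (c q) ^ x}].
Proof.
move=> p_pr sQ pQt sQ' pQt' [hc ec] hb [hc' ec'] hb' [x Gx ebc]; exists x.
have eH' : b' @: Qk' = (b @: Qk) :^ x.
  rewrite -ec -ec' /conjugate -!imset_comp; apply: eq_in_imset => q Qq.
  exact: ebc.
have [sHG pH tiT] := CenQ_tilde p_pr sQ pQt hb.
have [sHG' pH' tiT'] := CenQ_tilde p_pr sQ' pQt' hb'.
have [[hbi _] _] := hb; have [[hbi' _] _] := hb'.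
have sTG : b @: Qt \subset G by have [_ _] := hbi.
have [hx ex] := conjG_inj_hom Gx.
have tiTx : is_tilde p G (b' @: Qk') ((b @: Qt) :^ x).
  rewrite eH'; apply: (is_tilde_inj_hom hx ex (H := Group (inj_hom_group_set hbi sQ))
                         (S := Group (inj_hom_group_set hbi (subxx Qt)))) => //.
have [y Cy ey] := tilde_conj_subcent (H := Group (inj_hom_group_set hbi' sQ'))
  (S := ((Group (inj_hom_group_set hbi (subxx Qt))) :^ x)%G)
  (S' := Group (inj_hom_group_set hbi' (subxx Qt'))) p_pr sHG' pH' tiTx tiT'.
by exists y; split=> //; rewrite conjsgM.
Qed.

Lemma gconj_comp_index_eq p (gT qT : finGroupType) (G : {group gT}) (Q : {group qT})
  (I : finType) (tT : I -> finGroupType) (Qk Qt : forall k : I, {group tT k}) :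
  prime p ->
  (forall k, Qk k \subset Qt k /\ p.-group (Qt k)) ->
  (forall k k' : I, k != k' -> ~ pair_equiv (Qk k) (Qt k) (Qk k') (Qt k')) ->
  forall k k' (c : qT -> tT k) (b : tT k -> gT) (c' : qT -> tT k') (b' : tT k' -> gT),
    in_R Q (Qk k) (Qt k) c -> in_CenQ p (Qk k) (Qt k) G b ->
    in_R Q (Qk k') (Qt k') c' -> in_CenQ p (Qk k') (Qt k') G b' ->
    gconj Q G (b \o c) (b' \o c') -> k = k'.
Proof.
move=> p_pr hpair hineq k k' c b c' b' hc hb hc' hb' hbc.
have [sQ pQt] := hpair k; have [sQ' pQt'] := hpair k'.
have [x [y [_ Cy eH eT _]]] := gconj_comp_tilde p_pr sQ pQt sQ' pQt' hc hb hc' hb' hbc.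
have [[hbi _] _] := hb; have [[hbi' _] _] := hb'.
case: (eqVneq k k') => // /hineq []; apply: pair_equiv_trans (pair_equiv_imset _ hbi) _.
apply: pair_equiv_trans (pair_equiv_conj _ _ (x * y)) _.
rewrite -eT conjsgM -eH (conjsg_subcent Cy).
exact: pair_equiv_sym sQ' (pair_equiv_imset _ hbi').
Qed.

(* The automorphism is [b'^-1 ∘ c_(xy) ∘ b], with [x, y] from [gconj_comp_tilde]. *)
Lemma gconj_comp_AutQ p (gT qT : finGroupType) (G : {group gT}) (Q : {group qT})
  (tT : finGroupType) (Qk Qt : {group tT}) (c c' : qT -> tT) (b b' : tT -> gT) :
  prime p -> Qk \subset Qt -> p.-group Qt ->
  in_R Q Qk Qt c -> in_CenQ p Qk Qt G b ->
  in_R Q Qk Qt c' -> in_CenQ p Qk Qt G b' ->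
  gconj Q G (b \o c) (b' \o c') ->
  exists a : tT -> tT,
    [/\ in_AutQ Qk Qt a, {in Q, forall x, c' x = a (c x)} & gconj Qt G (b' \o a) b].
Proof.
move=> p_pr sQ pQt hc hb hc' hb' hbc.
have [x [y [Gx Cy eH eT ebc]]] := gconj_comp_tilde p_pr sQ pQt sQ pQt hc hb hc' hb' hbc.
have [[hbi _] _] := hb; have [[hbi' _] _] := hb'.
have hbT : inj_hom Qt (b @: Qt) b by apply: inj_hom_subr hbi _.
have hb'T : inj_hom Qt (b' @: Qt) b' by apply: inj_hom_subr hbi' _.
have [hb'inv eb'inv] := inj_hom_invm hb'T (erefl _).
set b'inv := invm (injm_inj_hom hb'T).
have hxy := conj_inj_hom (b @: Qt) (x * y); rewrite -eT in hxy.
have Gy : y \in G by case/setIP: Cy.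
have exyT : (conjg^~ (x * y)) @: (b @: Qt) = b' @: Qt by rewrite eT.
have exyK : (conjg^~ (x * y)) @: (b @: Qk) = b' @: Qk.
  by rewrite -[RHS](conjsg_subcent Cy) eH -conjsgM.
exists (b'inv \o (conjg^~ (x * y) \o b)); split.
- split.
  + exact: inj_hom_comp (inj_hom_comp hbT hxy) hb'inv.
  + by rewrite (imset_comp b'inv) (imset_comp (conjg^~ _) b) exyT.
  + by rewrite (imset_comp b'inv) (imset_comp (conjg^~ _) b) exyK invm_inj_hom_imset.
- move=> q Qq /=; rewrite conjgM -ebc //.
  have b'c'q : b' (c' q) \in b' @: Qk by rewrite imset_f // -(proj2 hc') imset_f.
  have -> : b' (c' q) ^ y = b' (c' q).
    by apply/conjg_fixP/commgP/commute_sym; case/setIP: Cy => _ /centP; apply.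
  by rewrite /b'inv invmE // (inj_hom_mem (proj1 hc')).
- exists (x * y)^-1; first by rewrite groupV groupM.
  move=> t Qt_t /=; have b't : b t ^ (x * y) \in b' @: Qt by rewrite eT memJ_conjg imset_f.
  have -> : b' (b'inv (b t ^ (x * y))) = b t ^ (x * y).
    by apply: (invmK (injm_inj_hom hb'T)); rewrite -inj_hom_morphimE.
  by rewrite conjgK.
Qed.

Theorem lemma4
  (p : nat) (gT : finGroupType) (G : {group gT})
  (I : finType) (tT : I -> finGroupType)
  (Qk Qt : forall k : I, {group tT k})
  (qT : finGroupType) (Q : {group qT})
  (p_pr : prime p)
  (hpair : forall k, Qk k \subset Qt k /\ p.-group (Qt k))
  (hineq : forall k k' : I, k != k' ->
     ~ pair_equiv (Qk k) (Qt k) (Qk k') (Qt k'))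
  (hrep : forall k, exists H : {group gT}, arising p G H /\
     exists S : {group gT}, is_tilde p G H S /\ pair_equiv (Qk k) (Qt k) H S)
  (hall : forall H S : {group gT}, arising p G H -> is_tilde p G H S ->
     exists k, pair_equiv H S (Qk k) (Qt k))
  (pQ : p.-group Q) :
  (* psi is well defined, with values in nCen(Q,G) *)
  (forall k (c : qT -> tT k) (b : tT k -> gT),
         in_R Q (Qk k) (Qt k) c -> in_CenQ p (Qk k) (Qt k) G b ->
         in_nCen p Q G (b \o c)) /\
      (forall k (c : qT -> tT k) (b b' : tT k -> gT),
         in_R Q (Qk k) (Qt k) c -> in_CenQ p (Qk k) (Qt k) G b ->
         gconj (Qt k) G b b' ->
         in_CenQ p (Qk k) (Qt k) G b' /\ gconj Q G (b \o c) (b' \o c)) /\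
      (forall k (c : qT -> tT k) (b : tT k -> gT) (a : tT k -> tT k),
         in_R Q (Qk k) (Qt k) c -> in_CenQ p (Qk k) (Qt k) G b ->
         in_AutQ (Qk k) (Qt k) a ->
         [/\ in_R Q (Qk k) (Qt k) (a \o c), in_CenQ p (Qk k) (Qt k) G (b \o a)
           & gconj Q G (b \o (a \o c)) ((b \o a) \o c)]) /\
  (* psi is surjective *)
      (forall f : qT -> gT, in_nCen p Q G f ->
         exists k, exists (c : qT -> tT k) (b : tT k -> gT),
           [/\ in_R Q (Qk k) (Qt k) c, in_CenQ p (Qk k) (Qt k) G b
             & gconj Q G (b \o c) f]) /\
  (* psi is injective on the coproduct of balanced products *)
      (forall k k' (c : qT -> tT k) (b : tT k -> gT)
              (c' : qT -> tT k') (b' : tT k' -> gT),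
         in_R Q (Qk k) (Qt k) c -> in_CenQ p (Qk k) (Qt k) G b ->
         in_R Q (Qk k') (Qt k') c' -> in_CenQ p (Qk k') (Qt k') G b' ->
         gconj Q G (b \o c) (b' \o c') -> k = k') /\
      (forall k (c c' : qT -> tT k) (b b' : tT k -> gT),
         in_R Q (Qk k) (Qt k) c -> in_CenQ p (Qk k) (Qt k) G b ->
         in_R Q (Qk k) (Qt k) c' -> in_CenQ p (Qk k) (Qt k) G b' ->
         gconj Q G (b \o c) (b' \o c') ->
         exists a : tT k -> tT k,
           [/\ in_AutQ (Qk k) (Qt k) a, {in Q, forall x, c' x = a (c x)}
             & gconj (Qt k) G (b' \o a) b]) /\
  (* psi is Out(Q)-equivariant (Out(Q) acting through Aut(Q) by precomposition) *)
      (forall k (c : qT -> tT k) (b : tT k -> gT) (phi : qT -> qT),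
         in_R Q (Qk k) (Qt k) c -> in_CenQ p (Qk k) (Qt k) G b -> in_Aut Q phi ->
         [/\ in_R Q (Qk k) (Qt k) (c \o phi), in_nCen p Q G ((b \o c) \o phi)
           & gconj Q G (b \o (c \o phi)) ((b \o c) \o phi)])
  (* psi is natural in G (with respect to group isomorphisms G ~= G') *)
    /\ (forall (gT' : finGroupType) (G' : {group gT'}) (f : gT -> gT'),
         inj_hom G G' f -> f @: G = G' ->
         forall k (c : qT -> tT k) (b b' : tT k -> gT),
         in_R Q (Qk k) (Qt k) c -> in_CenQ p (Qk k) (Qt k) G b ->
         [/\ in_CenQ p (Qk k) (Qt k) G' (f \o b),
             in_nCen p Q G' (f \o (b \o c)),
             (gconj (Qt k) G b b' -> gconj (Qt k) G' (f \o b) (f \o b'))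
           & gconj Q G' ((f \o b) \o c) (f \o (b \o c))]).
Proof.
have ltQ k : (#|Qk k| < #|Qt k|)%N.
  by have [sQ _] := hpair k; apply: (model_pair_card p_pr sQ (hrep k)).
have psi_nCen k c b : in_R Q (Qk k) (Qt k) c -> in_CenQ p (Qk k) (Qt k) G b ->
    in_nCen p Q G (b \o c).
  by have [sQ pQt] := hpair k; apply: (CenQ_comp_nCen p_pr sQ pQt (ltQ k)).
split; first exact: psi_nCen.
split; first by move=> k c b b'; have [sQ _] := hpair k; apply: (CenQ_gconj sQ).
split; first by move=> k c b a; apply: comp_AutQ.
split; first exact: (nCen_factor p_pr hall pQ).
split; first exact: (gconj_comp_index_eq p_pr hpair hineq).
split.
  by move=> k c c' b b'; have [sQ pQt] := hpair k; apply: (gconj_comp_AutQ p_pr sQ pQt).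
split.
  by move=> k c b phi hc hb; apply: (nCen_comp_Aut (psi_nCen k c b hc hb) hc).
move=> gT' G' f hf ef k c b b' hc hb; have [sQ _] := hpair k.
exact: (nCen_natural sQ b' hf ef (psi_nCen k c b hc hb) hb).
Qed.
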